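(* Let $k$ be a positive integer, $q=2^k$, $F(X)=X^{q^2-q+1}$, $T_k(Y)=\sum_{i=0}^{k-1}Y^{2^i}$ and $f_{k,q+1}(Y)=\dfrac{T_k(Y)^{q+1}}{Y^{q}}$ (a polynomial in $\mathbb{F}_2[Y]$). Then, in $\mathbb{F}_2[X]$, $$F(X)+F(X+1)+1=f_{k,q+1}(X+X^2).$$
   Context: $f_{k,2^k+1}$ is the Müller–Cohen–Matthews polynomial; it is a polynomial because $Y$ divides $T_k(Y)$. *)

From HB Require Import structures.
From mathcomp Require Import all_boot all_order all_algebra.
Set Implicit Arguments. Unset Strict Implicit. Unset Printing Implicit Defensive.
Import GRing.Theory.
Local Open Scope ring_scope.

Definition Tk (k : nat) : {poly 'F_2} := \sum_(i < k) 'X^(2 ^ i).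

(* f_{k,q+1}(Y) = T_k(Y)^(q+1) / Y^q with q = 2^k (exact division: Y | T_k) *)
Definition fkq1 (k : nat) : {poly 'F_2} :=
  (Tk k ^+ (2 ^ k).+1) %/ 'X^(2 ^ k).

Definition Fexp (k : nat) : nat := ((2 ^ k) ^ 2 - 2 ^ k + 1)%N.

From HB Require Import structures.
From mathcomp Require Import all_boot all_order all_algebra ring.
Import GRing.Theory.
Local Open Scope ring_scope.

(* Multiply both sides by Y^q, Y = X + X^2, which is not a zero divisor.  On
   the right, Y^q f(Y) = T_k(Y)^(q+1), and T_k(X + X^2) telescopes to X + X^q
   in characteristic 2.  On the left, F + q = q^2 + 1 turns X^F X^q into
   X X^(q^2) and (X+1)^F (X+1)^q into (X+1) (X+1)^(q^2); what remains is a
   ring identity, valid for any x in any commutative ring of characteristic 2. *)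

Lemma Fexp_add (k : nat) : (Fexp k + 2 ^ k = 2 ^ k * 2 ^ k + 1)%N.
Proof. by rewrite /Fexp -mulnn addnAC subnK // leq_pmulr ?expn_gt0. Qed.

Section Char2.

Variable R : comNzRingType.
Hypothesis pchar2 : 2 \in [pchar R].

Lemma exprD_pow2_pchar2 (x y : R) (n : nat) :
  (x + y) ^+ (2 ^ n) = x ^+ (2 ^ n) + y ^+ (2 ^ n).
Proof.
apply: exprDn_pchar.
by rewrite pnatX (pnatE _ (pcharf_prime pchar2)) pchar2.
Qed.

(* Read u, v, q, q2 as x^F, (x + 1)^F, x^q, x^(q^2). *)
Lemma pchar2_mul_identity (x q q2 u v : R) :
    u * q = x * q2 -> v * (q + 1) = (q2 + 1) * (x + 1) ->
  (u + v + 1) * (q + q ^+ 2) = (q + q2) * (x + q).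
Proof.
move=> uq vq; transitivity (u * q * (1 + q) + v * (q + 1) * q + (q + q ^+ 2)).
  by ring.
rewrite uq vq; transitivity ((q + q2) * (x + q) + (x * q * q2 + q) *+ 2).
  by ring.
by rewrite mulrn_pchar // addr0.
Qed.

Lemma Fexp_pchar2_identity (k : nat) (x : R) :
  (x ^+ Fexp k + (x + 1) ^+ Fexp k + 1) * (x + x ^+ 2) ^+ (2 ^ k)
    = (x + x ^+ (2 ^ k)) ^+ (2 ^ k).+1.
Proof.
have powF_mul (y : R) : y ^+ Fexp k * y ^+ (2 ^ k) = y * y ^+ (2 ^ k * 2 ^ k).
  by rewrite -exprD Fexp_add exprD mulrC.
have frob_sqr (y : R) : (y ^+ (2 ^ k)) ^+ (2 ^ k) = y ^+ (2 ^ (k + k)).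
  by rewrite -exprM -expnD.
rewrite exprD_pow2_pchar2 -exprM mulnC exprM [in RHS]exprSr exprD_pow2_pchar2 frob_sqr.
apply: pchar2_mul_identity; first by rewrite powF_mul expnD.
have frob_add1 (n : nat) : x ^+ (2 ^ n) + 1 = (x + 1) ^+ (2 ^ n).
  by rewrite exprD_pow2_pchar2 expr1n.
by rewrite !frob_add1 powF_mul expnD mulrC.
Qed.

End Char2.

Lemma pchar2_polyF2 : 2 \in [pchar {poly 'F_2}].
Proof. by rewrite pchar_poly pchar_Fp. Qed.

Lemma Tk_comp_add_sqr (k : nat) (p : {poly 'F_2}) :
  Tk k \Po (p + p ^+ 2) = p + p ^+ (2 ^ k).
Proof.
rewrite /Tk raddf_sum /=.
elim: k => [|k IH]; first by rewrite big_ord0 expn0 expr1 addrr_pchar2 // pchar2_polyF2.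
rewrite big_ord_recr /= IH comp_Xn_poly exprD_pow2_pchar2 ?pchar2_polyF2 //.
by rewrite -exprM -expnS addrA -(addrA p) addrr_pchar2 ?pchar2_polyF2 // addr0.
Qed.

Lemma X_dvdp_Tk (k : nat) : 'X %| Tk k.
Proof.
apply: (big_ind (fun p => 'X %| p)); [exact: dvdp0 | exact: dvdp_add | move=> i _].
by rewrite -{1}(expr1 'X) dvdp_exp2l // expn_gt0.
Qed.

Lemma fkq1_mulXn (k : nat) : fkq1 k * 'X^(2 ^ k) = Tk k ^+ (2 ^ k).+1.
Proof.
by rewrite /fkq1 divpK // exprS dvdp_mull // dvdp_exp2r // X_dvdp_Tk.
Qed.

Lemma XaddX2_neq0 : ('X + 'X^2 : {poly 'F_2}) != 0.
Proof.
apply/eqP => /(congr1 (fun p : {poly 'F_2} => p`_1)).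
by rewrite coefD coefX coefXn coef0 addr0 => /eqP; rewrite oner_eq0.
Qed.

Theorem mainTheorem4 (k : nat) (hk : (0 < k)%N) :
  'X^(Fexp k) + ('X + 1) ^+ (Fexp k) + 1 = (fkq1 k) \Po ('X + 'X^2 : {poly 'F_2}).
Proof.
apply: (mulIf (expf_neq0 (2 ^ k) XaddX2_neq0)).
rewrite Fexp_pchar2_identity ?pchar2_polyF2 //.
rewrite -(comp_Xn_poly ('X + 'X^2)) -comp_polyM fkq1_mulXn.
by rewrite rmorphXn /= Tk_comp_add_sqr.
Qed.
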